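(* Let $T$ be a complete o-minimal theory expanding the theory of real closed ordered fields, let $(\mathbb{U},\mathcal{O})\models T_{\mathrm{convex}}$, let $(\mathbb{E}_i)_{i<\lambda}$ be an increasing sequence of elementary substructures of $\mathbb{U}$ (as models of $T$), and let $\mathbb{E}_\lambda:=\bigcup_{i<\lambda}\mathbb{E}_i$. If $y\in\mathbb{U}$ is weakly immediate over $\mathbb{E}_i$ for all $i<\lambda$, then $y$ is weakly immediate over $\mathbb{E}_\lambda$.
   Context: $T_{\mathrm{convex}}$ is the theory of pairs $(\mathbb{U},\mathcal{O})$ with $\mathbb{U}\models T$ and $\mathcal{O}\ne\mathbb{U}$ a convex subring closed under all continuous $\emptyset$-definable functions. For $\mathbb{F}\subseteq\mathbb{U}$, $y$ is weakly immediate over $\mathbb{F}$ if $\{\mathrm{val}_{\mathcal{O}}(y-c):c\in\mathbb{F}\}$ has no maximum. *)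

From mathcomp Require Import all_boot all_order all_algebra.
Set Implicit Arguments. Unset Strict Implicit. Unset Printing Implicit Defensive.
Import Order.TTheory GRing.Theory Num.Theory.
Local Open Scope ring_scope.

Section Defs.
Variable U : rcfType.

Definition pt (n : nat) := 'I_n -> U.

(* S n is the collection of 0-definable subsets of U^n *)
Definition defsys := forall n : nat, (pt n -> Prop) -> Prop.

Definition init n (x : pt n.+1) : pt n := fun i => x (widen_ord (leqnSn n) i).
Definition tail n (x : pt n.+1) : pt n := fun i => x (lift ord0 i).
Definition snoc n (a : pt n) (b : U) : pt n.+1 :=
  fun i => match unlift ord_max i with Some j => a j | None => b end.

(* S is a structure on U in the sense of van den Dries (Tame Topology, Ch.1):
   the 0-definable sets of a first-order structure with universe U. *)
Definition is_structure (S : defsys) : Prop :=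
  (forall n (A B : pt n -> Prop), S n A -> (forall x, A x <-> B x) -> S n B) /\
      (forall n, S n (fun _ => True)) /\
      (forall n A, S n A -> S n (fun x => ~ A x)) /\
      (forall n A B, S n A -> S n B -> S n (fun x => A x /\ B x)) /\
      (forall n A, S n A -> S n.+1 (fun x => A (@init n x))) /\
      (forall n A, S n A -> S n.+1 (fun x => A (@tail n x))) /\
      (forall n (i j : 'I_n), S n (fun x => x i = x j)) /\
      (forall n A, S n.+1 A -> S n (fun x => exists b, A (@snoc n x b))).

Definition expands_ordered_field (S : defsys) : Prop :=
  [/\ S 2 (fun x => x (inord 0) < x (inord 1)),
      S 3 (fun x => x (inord 0) + x (inord 1) = x (inord 2)) &
      S 3 (fun x => x (inord 0) * x (inord 1) = x (inord 2))].

(* o-minimality: every subset of U definable with parameters (i.e. every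
   fiber of a 0-definable set) is a finite union of intervals and points *)
Definition o_minimal (S : defsys) : Prop :=
  forall n (A : pt n.+1 -> Prop), S n.+1 A -> forall a : pt n,
    exists s : seq (interval U), forall b, A (snoc a b) <-> has (fun I => b \in I) s.

(* U is an o-minimal expansion of a real closed ordered field; T := Th(U) *)
Definition o_minimal_expansion (S : defsys) : Prop :=
  [/\ is_structure S, expands_ordered_field S & o_minimal S].

(* E is (the universe of) an elementary substructure of U: Tarski-Vaught *)
Definition elementary_substructure (S : defsys) (E : U -> Prop) : Prop :=
  forall n (A : pt n.+1 -> Prop), S n.+1 A -> forall a : pt n,
    (forall i, E (a i)) -> (exists b, A (snoc a b)) -> exists b, E b /\ A (snoc a b).

Definition graph n (f : pt n -> U) : pt n.+1 -> Prop :=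
  fun x => f (init x) = x ord_max.

Definition definable_fun (S : defsys) n (f : pt n -> U) : Prop := S n.+1 (graph f).

Definition continuous_fun n (f : pt n -> U) : Prop :=
  forall (a : pt n) (e : U), 0 < e -> exists2 d : U, 0 < d &
    forall x : pt n, (forall i, `|x i - a i| < d) -> `|f x - f a| < e.

Definition is_Tconvex (S : defsys) (O : U -> Prop) : Prop :=
  O 0 /\ O 1 /\
      (forall a b, O a -> O b -> O (a + b)) /\
      (forall a, O a -> O (- a)) /\
      (forall a b, O a -> O b -> O (a * b)) /\
      (forall a b x, O a -> O b -> a <= x <= b -> O x) /\
      (exists x, ~ O x) /\
      (forall n (f : pt n -> U), definable_fun S f -> continuous_fun f ->
         forall x : pt n, (forall i, O (x i)) -> O (f x)).

(* val_O a <= val_O b  iff  b \in a O   (val_O 0 = infinity) *)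
Definition val_le (O : U -> Prop) (a b : U) : Prop := exists2 o, O o & b = a * o.

Definition weakly_immediate (O : U -> Prop) (F : U -> Prop) (y : U) : Prop :=
  ~ exists c, F c /\ forall c', F c' -> val_le O (y - c') (y - c).

End Defs.

(* If val(y - c) over the union attained its maximum at some c, then c lies in
   some E_i and is a fortiori a maximiser over E_i. *)
From mathcomp Require Import all_boot all_order all_algebra.
Import Order.TTheory GRing.Theory Num.Theory.

Lemma weakly_immediate_bigcup (U : rcfType) (O : U -> Prop) (I : Type)
    (F : I -> U -> Prop) (y : U) :
  (forall i, weakly_immediate O (F i) y) ->
  weakly_immediate O (fun x => exists i, F i x) y.
Proof.
move=> immF [c [[i Fic] maxc]]; apply: (immF i).
by exists c; split=> // c' Fic'; apply: maxc; exists i.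
Qed.

Theorem lemma3p21 (U : rcfType) (S : defsys U) (O : U -> Prop)
  (d : Order.disp_t) (I : orderType d) (E : I -> U -> Prop) (y : U) :
  o_minimal_expansion S ->
  is_Tconvex S O ->
  well_founded (fun i j : I => (i < j)%O) ->
  (forall i, elementary_substructure S (E i)) ->
  (forall i j : I, (i <= j)%O -> forall x, E i x -> E j x) ->
  (forall i, weakly_immediate O (E i) y) ->
  weakly_immediate O (fun x => exists i, E i x) y.
Proof. by move=> _ _ _ _ _; apply: weakly_immediate_bigcup. Qed.
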